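(* The four axioms in the definition of an Elgot monad (Fixpoint, Naturality, Codiagonal, Uniformity) are mutually independent. More precisely, for each of these four axioms there exists a monad $\mathbb{T}$ on $\mathbf{Set}$ together with an operator $(\cdot)^\dagger:\mathbf{Set}(X,T(Y+X))\to\mathbf{Set}(X,TY)$ (for all sets $X,Y$) that satisfies the other three axioms but fails that one.
   Context: Let $\mathbf{C}$ be a category with binary coproducts (injections $\mathrm{inl},\mathrm{inr}$, copairing $[f,g]$). A monad is a Kleisli triple $(T,\eta,(\cdot)^\sharp)$; Kleisli composition is $g\cdot f=g^\sharp\circ f$. A monad $\mathbb{T}$ equipped with an operator $(\cdot)^\dagger:\mathbf{C}(X,T(Y+X))\to\mathbf{C}(X,TY)$ is an Elgot monad if: Fixpoint: $[\eta,f^\dagger]\cdot f=f^\dagger$ for $f:X\to T(Y+X)$; Naturality: $g\cdot f^\dagger=([\eta\circ\mathrm{inl}\cdot g,\ \eta\circ\mathrm{inr}]\cdot f)^\dagger$ for $g:Y\to TZ$, $f:X\to T(Y+X)$ (here $\eta\circ\mathrm{inl}\cdot g=T\mathrm{inl}\circ g$); Codiagonal: $f^{\dagger\dagger}=([\eta,\eta\circ\mathrm{inr}]\cdot f)^\dagger$ for $f:X\to T((Y+X)+X)$; Uniformity: for $h:X\to Z$ in $\mathbf{C}$, $g:Z\to T(Y+Z)$, $f:X\to T(Y+X)$, if $g\circ h=T(\mathrm{id}+h)\circ f$ then $g^\dagger\circ h=f^\dagger$. *)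

(* The category Set is modelled by Rocq
   types and functions; equality of morphisms is extensional (pointwise). *)

Record Monad : Type := {
  T : Type -> Type;
  ret : forall X : Type, X -> T X;
  bind : forall X Y : Type, (X -> T Y) -> T X -> T Y;
  bind_ext : forall X Y (f g : X -> T Y),
      (forall x, f x = g x) -> forall t, bind X Y f t = bind X Y g t;
  bind_ret : forall X (t : T X), bind X X (ret X) t = t;
  ret_bind : forall X Y (f : X -> T Y) (x : X), bind X Y f (ret X x) = f x;
  bind_bind : forall X Y Z (f : X -> T Y) (g : Y -> T Z) (t : T X),
      bind Y Z g (bind X Y f t) = bind X Z (fun x => bind Y Z g (f x)) t
}.

Arguments ret {m X} _.
Arguments bind {m X Y} _ _.

Definition copair {A B C : Type} (f : A -> C) (g : B -> C) (s : A + B) : C :=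
  match s with inl a => f a | inr b => g b end.

Definition summap {Y X Z : Type} (h : X -> Z) (s : Y + X) : Y + Z :=
  match s with inl y => inl y | inr x => inr (h x) end.

Definition Dagger (M : Monad) : Type :=
  forall X Y : Type, (X -> T M (Y + X)) -> X -> T M Y.

Definition dagger_ext (M : Monad) (d : Dagger M) : Prop :=
  forall X Y (f g : X -> T M (Y + X)),
    (forall x, f x = g x) -> forall x, d X Y f x = d X Y g x.

Definition Fixpoint_ax (M : Monad) (d : Dagger M) : Prop :=
  forall X Y (f : X -> T M (Y + X)) (x : X),
    bind (copair (@ret M Y) (d X Y f)) (f x) = d X Y f x.

Definition Naturality_ax (M : Monad) (d : Dagger M) : Prop :=
  forall X Y Z (g : Y -> T M Z) (f : X -> T M (Y + X)) (x : X),
    bind g (d X Y f x) =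
    d X Z (fun x' => bind (copair (fun y => bind (fun z => @ret M (Z + X) (inl z)) (g y))
                                  (fun x'' => @ret M (Z + X) (inr x'')))
                          (f x')) x.

Definition Codiagonal_ax (M : Monad) (d : Dagger M) : Prop :=
  forall X Y (f : X -> T M ((Y + X) + X)) (x : X),
    d X Y (d X (Y + X)%type f) x =
    d X Y (fun x' => bind (copair (@ret M (Y + X)) (fun x'' => @ret M (Y + X) (inr x'')))
                          (f x')) x.

Definition Uniformity_ax (M : Monad) (d : Dagger M) : Prop :=
  forall X Y Z (h : X -> Z) (g : Z -> T M (Y + Z)) (f : X -> T M (Y + X)),
    (forall x, g (h x) = bind (fun s => @ret M (Y + Z) (summap h s)) (f x)) ->
    forall x, d Z Y g (h x) = d X Y f x.

(* All four counterexamples live on the monad [Outcome] of nondeterminism with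
   divergence on Set: [Outcomes X] is a set of possible results in X together with
   a proposition "the computation may diverge" (i.e. the powerset of X + 1), or on
   its submonad [NEOutcome] of nonempty such sets.

   A loop body F : X -> Outcomes (Y + X) is a graph on X: x steps to x' when
   inr x' is a possible result of F x, x exits with y when inl y is, and x fails when
   F x may diverge.  A "trace dagger" F^dagger x collects the exits and failures
   reachable from x, plus whatever a chosen divergence behaviour [div] contributes
   at x.  Fixpoint and Uniformity hold for every trace dagger whose divergence
   behaviour is invariant under steps and under loop morphisms; Naturality and
   Codiagonal are checked per behaviour, the latter through the fact that a loop
   whose body is a loop behaves as the flattened loop ([nested_outcome]).

   The counterexamples are:
   - the empty dagger (only Fixpoint fails);
   - "chaos": an infinite run yields every result and divergence (Naturality fails);
   - "silent divergence" on nonempty outcomes: divergence only along runs that pass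
     through nodes without exits (Codiagonal fails);
   - divergence is flagged only when the state space is a subsingleton
     (Uniformity fails). *)

From Stdlib Require Import Relation_Operators FunctionalExtensionality
  PropExtensionality ProofIrrelevance Classical.
From Stdlib Require Operators_Properties.

(** Possible results together with the possibility of divergence. *)
Definition Outcomes (X : Type) : Type := ((X -> Prop) * Prop)%type.

Definition pure {X : Type} (x : X) : Outcomes X := (fun y => y = x, False).

Definition obind {X Y : Type} (f : X -> Outcomes Y) (t : Outcomes X) : Outcomes Y :=
  (fun y => exists x, fst t x /\ fst (f x) y,
   snd t \/ exists x, fst t x /\ snd (f x)).

Lemma outcomes_ext {X : Type} (p q : Outcomes X) :
  (forall x, fst p x <-> fst q x) -> (snd p <-> snd q) -> p = q.
Proof.
  destruct p as [p1 p2], q as [q1 q2]; simpl; intros H1 H2; f_equal.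
  - extensionality x; apply propositional_extensionality; auto.
  - apply propositional_extensionality; auto.
Qed.

Lemma obind_pure (X : Type) (t : Outcomes X) : obind pure t = t.
Proof.
  apply outcomes_ext; simpl.
  - intro y; split; [intros [x [Hx ->]]; exact Hx | intro Hy; exists y; auto].
  - split; [intros [H | [x [_ []]]]; exact H | auto].
Qed.

Lemma pure_obind (X Y : Type) (f : X -> Outcomes Y) (x : X) : obind f (pure x) = f x.
Proof.
  apply outcomes_ext; simpl.
  - intro y; split; [intros [x' [-> H]]; exact H | intro H; exists x; auto].
  - split; [intros [[] | [x' [-> H]]]; exact H | intro H; right; exists x; auto].
Qed.

Lemma obind_assoc (X Y Z : Type) (f : X -> Outcomes Y) (g : Y -> Outcomes Z)
  (t : Outcomes X) : obind g (obind f t) = obind (fun x => obind g (f x)) t.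
Proof.
  apply outcomes_ext; simpl.
  - intro z; split.
    + intros [y [[x [Hx Hy]] Hz]]; exists x; split; [|exists y]; auto.
    + intros [x [Hx [y [Hy Hz]]]]; exists y; split; [exists x|]; auto.
  - split.
    + intros [[H | [x [Hx Hf]]] | [y [[x [Hx Hy]] Hg]]]; auto.
      * right; exists x; auto.
      * right; exists x; split; [|right; exists y]; auto.
    + intros [H | [x [Hx [Hf | [y [Hy Hg]]]]]]; auto.
      * left; right; exists x; auto.
      * right; exists y; split; [exists x|]; auto.
Qed.

Lemma obind_ext (X Y : Type) (f g : X -> Outcomes Y) :
  (forall x, f x = g x) -> forall t, obind f t = obind g t.
Proof. intros H t; replace g with f by (extensionality x; apply H); reflexivity. Qed.

Definition Outcome : Monad := {|
  T := Outcomes; ret := @pure; bind := @obind;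
  bind_ext := obind_ext; bind_ret := obind_pure; ret_bind := pure_obind;
  bind_bind := obind_assoc |}.

Lemma every_dagger_ext (M : Monad) (d : Dagger M) : dagger_ext M d.
Proof.
  intros X Y f g H x; replace g with f by (extensionality x'; apply H); reflexivity.
Qed.

Lemma relation_ext {A B : Type} (r s : A -> B -> Prop) :
  (forall a b, r a b <-> s a b) -> r = s.
Proof.
  intros H; extensionality a; extensionality b; apply propositional_extensionality; auto.
Qed.

Notation reach R := (clos_refl_trans_1n _ R).

Definition reaches {X : Type} (R : X -> X -> Prop) (Q : X -> Prop) (x : X) : Prop :=
  exists w, reach R x w /\ Q w.

(** There is an infinite [R]-path from [x] (witnessed by an [R]-progressive set). *)
Definition diverges {X : Type} (R : X -> X -> Prop) (x : X) : Prop :=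
  exists P : X -> Prop, P x /\ forall w, P w -> exists w', R w w' /\ P w'.

Definition outcome {X : Type} (R : X -> X -> Prop) (Q : X -> Prop) (b : Prop) (x : X)
  : Prop := reaches R Q x \/ (b /\ diverges R x).

Definition step_invariant {X : Type} (R : X -> X -> Prop) (P : X -> Prop) : Prop :=
  forall x, P x <-> exists x', R x x' /\ P x'.

Section Paths.
Context {X : Type}.
Implicit Types (R S : X -> X -> Prop) (Q : X -> Prop).

Lemma reach_trans R x y z : reach R x y -> reach R y z -> reach R x z.
Proof.
  intros Hxy Hyz; apply Operators_Properties.clos_rt_rt1n.
  apply rt_trans with y; apply Operators_Properties.clos_rt1n_rt; assumption.
Qed.

Lemma reach_snoc R x y z : reach R x y -> R y z -> reach R x z.
Proof.
  intros Hxy Hyz; apply reach_trans with y;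
    [|apply Operators_Properties.clos_rt1n_step]; assumption.
Qed.

Lemma reach_mono R S x y : (forall u v, R u v -> S u v) -> reach R x y -> reach S x y.
Proof. intros HRS; induction 1; [apply rt1n_refl | eapply rt1n_trans; eauto]. Qed.

Lemma reaches_here R Q x : Q x -> reaches R Q x.
Proof. exists x; split; [apply rt1n_refl | assumption]. Qed.

Lemma reaches_unfold R Q x :
  reaches R Q x <-> Q x \/ exists x', R x x' /\ reaches R Q x'.
Proof.
  split.
  - intros [w [Hxw Hw]]; destruct Hxw as [|x' w Hxx' Hx'w]; [left; exact Hw|].
    right; exists x'; split; [|exists w]; auto.
  - intros [Hx | [x' [Hxx' [w [Hx'w Hw]]]]]; [apply reaches_here; exact Hx|].
    exists w; split; [eapply rt1n_trans|]; eauto.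
Qed.

Lemma reaches_step_invariant R Q :
  (forall x, Q x -> exists x', R x x' /\ Q x') -> step_invariant R (reaches R Q).
Proof.
  intros HQ x; rewrite reaches_unfold; split.
  - intros [Hx | H]; [|exact H].
    destruct (HQ x Hx) as [x' [Hxx' Hx']]; exists x'; split; [|apply reaches_here]; auto.
  - intros H; right; exact H.
Qed.

Lemma diverges_step_invariant R : step_invariant R (diverges R).
Proof.
  intro x; split.
  - intros [P [Hx HP]]; destruct (HP x Hx) as [x' [Hxx' Hx']].
    exists x'; split; [|exists P]; auto.
  - intros [x' [Hxx' [P [Hx' HP]]]]; exists (fun w => w = x \/ P w); split; [auto|].
    intros w [-> | Hw]; [exists x'; auto|].
    destruct (HP w Hw) as [w' [? ?]]; eauto.
Qed.

Lemma diverges_reach R x y : reach R x y -> diverges R y -> diverges R x.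
Proof.
  induction 1 as [|x x' y Hxx' _ IH]; [auto|].
  intros Hy; apply diverges_step_invariant; exists x'; auto.
Qed.

Lemma diverges_mono R S x : (forall u v, R u v -> S u v) -> diverges R x -> diverges S x.
Proof.
  intros HRS [P [Hx HP]]; exists P; split; [exact Hx|].
  intros w Hw; destruct (HP w Hw) as [w' [? ?]]; eauto.
Qed.

Lemma diverges_by_paths R (P : X -> Prop) x : P x ->
  (forall w, P w -> exists w', (exists u, reach R w u /\ R u w') /\ P w') ->
  diverges R x.
Proof.
  intros Hx HP.
  exists (fun v => exists w', P w' /\ exists u, reach R v u /\ R u w'); split.
  - destruct (HP x Hx) as [w' [? ?]]; eauto.
  - intros v [w' [Hw' [u [Hvu Huw']]]].
    destruct Hvu as [|v1 u Hvv1 Hv1u].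
    + exists w'; split; [exact Huw'|].
      destruct (HP w' Hw') as [w'' [? ?]]; eauto.
    + exists v1; split; eauto.
Qed.

Lemma reaches_ext R Q1 Q2 x :
  (forall w, Q1 w <-> Q2 w) -> reaches R Q1 x <-> reaches R Q2 x.
Proof. unfold reaches; firstorder. Qed.

Lemma reaches_or R Q1 Q2 x :
  reaches R (fun w => Q1 w \/ Q2 w) x <-> reaches R Q1 x \/ reaches R Q2 x.
Proof. unfold reaches; firstorder. Qed.

Lemma reaches_exists {Y : Type} R (P : X -> Y -> Prop) (B : Y -> Prop) x :
  reaches R (fun w => exists y, P w y /\ B y) x <->
  exists y, reaches R (fun w => P w y) x /\ B y.
Proof. unfold reaches; firstorder. Qed.

Lemma reaches_back R S Q x x' :
  (forall u u' v, S u u' -> R u' v -> R u v) -> (forall u u', S u u' -> Q u' -> Q u) ->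
  S x x' -> reaches R Q x' -> reaches R Q x.
Proof.
  intros HR HQ Hxx' [w [Hx'w Hw]]; destruct Hx'w as [|v w Hx'v Hvw].
  - apply reaches_here; eauto.
  - exists w; split; [eapply rt1n_trans|]; eauto.
Qed.

Lemma outcome_back R Q (b : Prop) x x' : R x x' -> outcome R Q b x' -> outcome R Q b x.
Proof.
  intros Hxx' [Hr | [Hb Hd]]; [left | right].
  - apply reaches_unfold; eauto.
  - split; [exact Hb|]; apply diverges_step_invariant; eauto.
Qed.

Lemma diverges_sub R S w :
  (forall u v, reach R w u -> R u v -> S u v) -> diverges R w -> diverges S w.
Proof.
  intros HRS [P [Hw HP]]; exists (fun u => reach R w u /\ P u).
  split; [split; [apply rt1n_refl | exact Hw]|].
  intros u [Hwu Hu]; destruct (HP u Hu) as [v [Huv Hv]].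
  exists v; split; [|split; [eapply reach_snoc|]]; eauto.
Qed.

Lemma diverges_serial R x :
  (forall w, exists w', R w w') -> diverges R x.
Proof.
  intros HR; exists (fun _ => True); split; [exact I|].
  intros w _; destruct (HR w) as [w' Hw']; eauto.
Qed.

End Paths.

Definition loop_step {X Y : Type} (F : X -> Outcomes (Y + X)) (x x' : X) : Prop :=
  fst (F x) (inr x').
Definition loop_exit {X Y : Type} (F : X -> Outcomes (Y + X)) (x : X) (y : Y) : Prop :=
  fst (F x) (inl y).
Definition loop_fail {X Y : Type} (F : X -> Outcomes (Y + X)) (x : X) : Prop :=
  snd (F x).

(** [h] maps the graph of [F] onto the graph of [G] restricted to the image of [h]:
    the premise of Uniformity, in graph form. *)
Definition loop_morphism {X Z Y : Type} (h : X -> Z)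
    (F : X -> Outcomes (Y + X)) (G : Z -> Outcomes (Y + Z)) : Prop :=
  (forall x z, loop_step G (h x) z <-> exists x', loop_step F x x' /\ z = h x') /\
  (forall x y, loop_exit G (h x) y <-> loop_exit F x y) /\
  (forall x, loop_fail G (h x) <-> loop_fail F x).

Lemma uniformity_premise_morphism {X Y Z : Type} (h : X -> Z)
    (G : Z -> Outcomes (Y + Z)) (F : X -> Outcomes (Y + X)) :
  (forall x, G (h x) = obind (fun s => pure (summap h s)) (F x)) -> loop_morphism h F G.
Proof.
  intros HGF; unfold loop_morphism, loop_step, loop_exit, loop_fail; split; [|split]; intros;
    rewrite HGF; simpl; split.
  - intros [[y | x'] [Hs Hz]]; [discriminate|].
    injection Hz as ->; exists x'; auto.
  - intros [x' [Hx' ->]]; exists (inr x'); auto.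
  - intros [[y' | x'] [Hs Hy]]; [|discriminate].
    injection Hy as ->; exact Hs.
  - intros Hy; exists (inl y); auto.
  - intros [H | [s [_ []]]]; exact H.
  - intros H; left; exact H.
Qed.

Section Transport.
Context {X Z : Type} (h : X -> Z) (R : X -> X -> Prop) (S : Z -> Z -> Prop).
Hypothesis step_image : forall x z, S (h x) z <-> exists x', R x x' /\ z = h x'.

Lemma reach_down x w : reach S (h x) w -> exists x', reach R x x' /\ w = h x'.
Proof.
  intros Hw; remember (h x) as z eqn:Ez; revert x Ez.
  induction Hw as [z | z z' w Hzz' _ IH]; intros x ->.
  - exists x; split; [apply rt1n_refl | reflexivity].
  - apply step_image in Hzz' as [x' [Hxx' ->]].
    destruct (IH x' eq_refl) as [x'' [Hx'x'' ->]].
    exists x''; split; [eapply rt1n_trans|]; eauto.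
Qed.

Lemma reach_up x x' : reach R x x' -> reach S (h x) (h x').
Proof.
  induction 1 as [|x x' x'' Hxx' _ IH]; [apply rt1n_refl|].
  eapply rt1n_trans; [apply step_image; eauto | exact IH].
Qed.

Lemma reaches_transport (Q : X -> Prop) (Q' : Z -> Prop) :
  (forall x, Q' (h x) <-> Q x) -> forall x, reaches S Q' (h x) <-> reaches R Q x.
Proof.
  intros HQ x; split.
  - intros [w [Hxw Hw]]; destruct (reach_down x w Hxw) as [x' [Hxx' ->]].
    exists x'; split; [|apply HQ]; assumption.
  - intros [w [Hxw Hw]]; exists (h w); split; [apply reach_up | apply HQ]; assumption.
Qed.

Lemma diverges_transport x : diverges S (h x) <-> diverges R x.
Proof.
  split.
  - intros [P [Hx HP]]; exists (fun v => P (h v)); split; [exact Hx|].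
    intros w Hw; destruct (HP _ Hw) as [z [Hz HPz]].
    apply step_image in Hz as [w' [Hww' ->]]; eauto.
  - intros [P [Hx HP]]; exists (fun z => exists v, z = h v /\ P v); split; [eauto|].
    intros z [v [-> Hv]]; destruct (HP _ Hv) as [v' [Hvv' Hv']].
    exists (h v'); split; [apply step_image|]; eauto.
Qed.
End Transport.

Definition trace_dagger (div : Dagger Outcome) : Dagger Outcome :=
  fun X Y F x =>
    (fun y => reaches (loop_step F) (fun w => loop_exit F w y) x \/ fst (div X Y F x) y,
     reaches (loop_step F) (loop_fail F) x \/ snd (div X Y F x)).

Definition div_step_invariant (div : Dagger Outcome) : Prop :=
  forall X Y (F : X -> Outcomes (Y + X)),
    (forall y, step_invariant (loop_step F) (fun x => fst (div X Y F x) y)) /\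
    step_invariant (loop_step F) (fun x => snd (div X Y F x)).

Definition div_morphism_invariant (div : Dagger Outcome) : Prop :=
  forall X Z Y (h : X -> Z) (F : X -> Outcomes (Y + X)) (G : Z -> Outcomes (Y + Z)),
    loop_morphism h F G -> forall x, div Z Y G (h x) = div X Y F x.

(** Fixpoint: unfolding one step of every run changes nothing. *)
Lemma trace_fixpoint (div : Dagger Outcome) :
  div_step_invariant div -> Fixpoint_ax Outcome (trace_dagger div).
Proof.
  intros Hdiv X Y F x; destruct (Hdiv X Y F) as [Hres Hflag]; simpl.
  apply outcomes_ext; simpl.
  - intro y; rewrite reaches_unfold, (Hres y x); unfold loop_exit, loop_step; split.
    + intros [[y' | x'] [Hs Hy]]; simpl in Hy.
      * subst; auto.
      * destruct Hy; eauto 6.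
    + intros [[Hy | [x' [Hs Hy]]] | [x' [Hs Hy]]];
        [exists (inl y) | exists (inr x') | exists (inr x')]; simpl; auto.
  - rewrite reaches_unfold, (Hflag x); unfold loop_fail, loop_step; split.
    + intros [Hx | [[y' | x'] [Hs Hf]]]; [auto | destruct Hf |].
      simpl in Hf; destruct Hf; eauto 6.
    + intros [[Hx | [x' [Hs Hf]]] | [x' [Hs Hf]]]; auto; right; exists (inr x'); simpl; auto.
Qed.

(** Uniformity: a loop morphism transports finite runs, and [div] by assumption. *)
Lemma trace_uniformity (div : Dagger Outcome) :
  div_morphism_invariant div -> Uniformity_ax Outcome (trace_dagger div).
Proof.
  intros Hdiv X Y Z h G F HGF x.
  pose proof (uniformity_premise_morphism h G F HGF) as Hmor.
  pose proof Hmor as [Hstep [Hexit Hfail]].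
  unfold trace_dagger; rewrite (Hdiv _ _ _ h F G Hmor x).
  apply outcomes_ext; simpl.
  - intro y; rewrite (reaches_transport h _ _ Hstep _ _ (fun x => Hexit x y)); tauto.
  - rewrite (reaches_transport h _ _ Hstep _ _ Hfail); tauto.
Qed.

Definition infinite_run (a : Prop) (c : Type -> Prop) : Dagger Outcome :=
  fun X Y F x => (fun _ => a /\ diverges (loop_step F) x, c X /\ diverges (loop_step F) x).

Lemma infinite_run_step_invariant (a : Prop) (c : Type -> Prop) :
  div_step_invariant (infinite_run a c).
Proof.
  intros X Y F; split; [intros y|]; intros x; simpl;
    rewrite (diverges_step_invariant _ x); firstorder.
Qed.

Lemma infinite_run_morphism_invariant (a c : Prop) :
  div_morphism_invariant (infinite_run a (fun _ => c)).
Proof.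
  intros X Z Y h F G [Hstep _] x; apply outcomes_ext; simpl;
    [intros _|]; rewrite (diverges_transport h _ _ Hstep x); tauto.
Qed.

(** The loop body [[eta o inl . g, eta o inr] . F] on the right of Naturality. *)
Definition postcompose {X Y Z : Type} (g : Y -> Outcomes Z) (F : X -> Outcomes (Y + X))
  : X -> Outcomes (Z + X) :=
  fun x => obind (copair (fun y => obind (fun z => pure (inl z)) (g y))
                         (fun x' => pure (inr x'))) (F x).

Section Postcompose.
Context {X Y Z : Type} (g : Y -> Outcomes Z) (F : X -> Outcomes (Y + X)).

Lemma loop_step_postcompose : loop_step (postcompose g F) = loop_step F.
Proof.
  apply relation_ext; intros u v; unfold loop_step, postcompose; simpl; split.
  - intros [[y | x'] [Hs Hv]]; simpl in Hv.
    + destruct Hv as [z [_ Hz]]; discriminate.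
    + injection Hv as ->; exact Hs.
  - intros Hv; exists (inr v); simpl; auto.
Qed.

Lemma loop_exit_postcompose x z :
  loop_exit (postcompose g F) x z <-> exists y, loop_exit F x y /\ fst (g y) z.
Proof.
  unfold loop_exit, postcompose; simpl; split.
  - intros [[y | x'] [Hs Hz]]; simpl in Hz; [|discriminate].
    destruct Hz as [z' [Hz' Hz]]; injection Hz as ->; eauto.
  - intros [y [Hy Hz]]; exists (inl y); simpl; split; [|exists z]; auto.
Qed.

Lemma loop_fail_postcompose x :
  loop_fail (postcompose g F) x <-> loop_fail F x \/ exists y, loop_exit F x y /\ snd (g y).
Proof.
  unfold loop_fail, loop_exit, postcompose; simpl; split.
  - intros [Hx | [[y | x'] [Hs Hf]]]; [auto | | destruct Hf].
    destruct Hf as [Hf | [z [_ []]]]; eauto.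
  - intros [Hx | [y [Hy Hg]]]; [auto | right; exists (inl y); simpl; auto].
Qed.

Lemma trace_naturality_at (div : Dagger Outcome) x :
  (forall z, fst (div X Z (postcompose g F) x) z <->
             exists y, fst (div X Y F x) y /\ fst (g y) z) ->
  (let escape := exists y, reaches (loop_step F) (fun w => loop_exit F w y) x /\ snd (g y) in
   snd (div X Z (postcompose g F) x) \/ escape <->
   snd (div X Y F x) \/ (exists y, fst (div X Y F x) y /\ snd (g y)) \/ escape) ->
  obind g (trace_dagger div X Y F x) = trace_dagger div X Z (postcompose g F) x.
Proof.
  intros Hres Hflag; unfold trace_dagger; rewrite loop_step_postcompose.
  apply outcomes_ext; simpl.
  - intro z; rewrite Hres.
    rewrite (reaches_ext _ _ _ x (fun w => loop_exit_postcompose w z)), reaches_exists.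
    firstorder.
  - rewrite (reaches_ext _ _ _ x loop_fail_postcompose), reaches_or, reaches_exists.
    simpl in Hflag; firstorder.
Qed.
End Postcompose.

(** Without the "every result" clause, infinite runs commute with Kleisli maps. *)
Lemma infinite_run_naturality (c : Type -> Prop) :
  Naturality_ax Outcome (trace_dagger (infinite_run False c)).
Proof.
  intros X Y Z g F x; apply trace_naturality_at; simpl;
    rewrite loop_step_postcompose; firstorder.
Qed.

(** An outer loop whose steps are whole runs of an inner loop ([inner] steps,
    [cont] exits "continue the outer loop at w") behaves like the single flat loop. *)
Section NestedLoops.
Context {X : Type} (inner cont : X -> X -> Prop) (a b : Prop).
Hypothesis a_b : a -> b.

Definition outer_step (x w : X) : Prop := outcome inner (fun u => cont u w) a x.
Definition flat_step (u v : X) : Prop := cont u v \/ inner u v.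

Lemma inner_flat u v : inner u v -> flat_step u v.
Proof. unfold flat_step; auto. Qed.

Lemma outer_step_flat x w :
  outer_step x w ->
  (exists u, reach flat_step x u /\ flat_step u w) \/ (a /\ diverges flat_step x).
Proof.
  intros [[u [Hxu Hu]] | [Ha Hd]]; [left | right].
  - exists u; split; [apply (reach_mono inner) | left]; auto using inner_flat.
  - split; [exact Ha | apply (diverges_mono inner); auto using inner_flat].
Qed.

Lemma reach_outer_flat x w :
  reach outer_step x w -> reach flat_step x w \/ (a /\ diverges flat_step x).
Proof.
  induction 1 as [|x x' w Hxx' _ IH]; [left; apply rt1n_refl|].
  destruct (outer_step_flat x x' Hxx') as [[u [Hxu Hux']] | Hd]; [|right; exact Hd].
  assert (Hxx'_flat : reach flat_step x x') by (eapply reach_snoc; eauto).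
  destruct IH as [Hx'w | [Ha Hd]]; [left; eapply reach_trans; eauto|].
  right; split; [exact Ha | eapply diverges_reach; eauto].
Qed.

Lemma diverges_outer_flat x : diverges outer_step x -> diverges flat_step x.
Proof.
  intros [P [Hx HP]].
  assert (Hcontinue : forall w, diverges flat_step w ->
                      exists w', (exists u, reach flat_step w u /\ flat_step u w') /\
                                 (P w' \/ diverges flat_step w')).
  { intros v Hv; apply diverges_step_invariant in Hv as [v' [Hvv' Hv']].
    exists v'; split; [exists v; split; [apply rt1n_refl|]|]; auto. }
  apply (diverges_by_paths flat_step (fun v => P v \/ diverges flat_step v)); [auto|].
  intros w [Hw | Hw]; [|auto].
  destruct (HP w Hw) as [w' [Hww' Hw']].
  destruct (outer_step_flat w w' Hww') as [Hpath | [_ Hd]]; [exists w'; auto | auto].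
Qed.

Lemma inner_outer_back x x' w : inner x x' -> outer_step x' w -> outer_step x w.
Proof. apply outcome_back. Qed.

Lemma reaches_flat_outer Q x :
  reaches flat_step Q x -> reaches outer_step (outcome inner Q b) x.
Proof.
  intros [w [Hxw Hw]]; induction Hxw as [x | x x' w [Hc | Hi] _ IH].
  - apply reaches_here; left; apply reaches_here; exact Hw.
  - apply reaches_unfold; right; exists x'; split; [|auto].
    left; apply reaches_here; exact Hc.
  - eapply reaches_back; [exact inner_outer_back | | exact Hi | auto].
    intros u u'; apply outcome_back.
Qed.

Lemma diverges_flat_outer x :
  diverges flat_step x -> diverges outer_step x \/ reaches outer_step (diverges inner) x.
Proof.
  intros [P [Hx HP]].
  destruct (classic (reaches outer_step (diverges inner) x)) as [Hin | Hno]; [auto | left].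
  exists (fun v => reach outer_step x v /\ P v); split; [split; [apply rt1n_refl | exact Hx]|].
  intros v [Hxv Hv].
  destruct (classic (exists v', outer_step v v' /\ P v')) as [[v' [Hvv' Hv']] | Hstuck].
  - exists v'; split; [|split; [eapply reach_snoc|]]; eauto.
  - exfalso; apply Hno; exists v; split; [exact Hxv|].
    exists (fun u => reach inner v u /\ P u); split; [split; [apply rt1n_refl | exact Hv]|].
    intros u [Hvu Hu]; destruct (HP u Hu) as [u' [[Hc | Hi] Hu']].
    + exfalso; apply Hstuck; exists u'; split; [left; exists u; auto | exact Hu'].
    + exists u'; split; [|split; [eapply reach_snoc|]]; eauto.
Qed.

Theorem nested_outcome Q x :
  outcome outer_step (outcome inner Q b) b x <-> outcome flat_step Q b x.
Proof.
  split.
  - intros [[w [Hxw Hw]] | [Hb Hd]]; [|right; split; [|apply diverges_outer_flat]; auto].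
    destruct (reach_outer_flat x w Hxw) as [Hxw' | [Ha Hd]];
      [|right; split; [apply a_b|]; auto].
    destruct Hw as [[u [Hwu Hu]] | [Hb Hd]]; [left | right; split; [exact Hb|]].
    + exists u; split; [|exact Hu].
      eapply reach_trans; [exact Hxw'|]; apply (reach_mono inner); auto using inner_flat.
    + eapply diverges_reach; [exact Hxw'|]; apply (diverges_mono inner); auto using inner_flat.
  - intros [Hr | [Hb Hd]]; [left; apply reaches_flat_outer; exact Hr|].
    destruct (diverges_flat_outer x Hd) as [Hd' | [w [Hxw Hw]]]; [right; auto|].
    left; exists w; split; [exact Hxw | right; auto].
Qed.
End NestedLoops.

(** The loop body [[eta, eta o inr] . F] on the right of Codiagonal. *)
Definition flatten {X Y : Type} (F : X -> Outcomes ((Y + X) + X)) : X -> Outcomes (Y + X) :=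
  fun x => obind (copair pure (fun x' => pure (inr x'))) (F x).

Section Flatten.
Context {X Y : Type} (F : X -> Outcomes ((Y + X) + X)).

Lemma loop_step_flatten :
  loop_step (flatten F) = flat_step (loop_step F) (fun u v => loop_exit F u (inr v)).
Proof.
  apply relation_ext; intros u v; unfold loop_step, loop_exit, flatten, flat_step; simpl.
  split.
  - intros [[s | x'] [Hs Hv]]; simpl in Hv; [subst; auto|].
    injection Hv as ->; auto.
  - intros [Hv | Hv]; [exists (inl (inr v)) | exists (inr v)]; simpl; auto.
Qed.

Lemma loop_exit_flatten : loop_exit (flatten F) = fun u y => loop_exit F u (inl y).
Proof.
  apply relation_ext; intros u y; unfold loop_exit, flatten; simpl; split.
  - intros [[s | x'] [Hs Hy]]; simpl in Hy; [subst; auto | discriminate].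
  - intros Hy; exists (inl (inl y)); simpl; auto.
Qed.

Lemma loop_fail_flatten : loop_fail (flatten F) = loop_fail F.
Proof.
  extensionality u; apply propositional_extensionality.
  unfold loop_fail, flatten; simpl; split; [|auto].
  intros [Hu | [[s | x'] [_ []]]]; exact Hu.
Qed.
End Flatten.

Lemma infinite_run_codiagonal (a : Prop) (c : Type -> Prop) :
  (forall X, a -> c X) -> Codiagonal_ax Outcome (trace_dagger (infinite_run a c)).
Proof.
  intros Hac X Y F x; set (d := trace_dagger (infinite_run a c)).
  change (d X Y (d X (Y + X)%type F) x = d X Y (flatten F) x); unfold d.
  apply outcomes_ext; simpl;
    rewrite loop_step_flatten, ?loop_exit_flatten, ?loop_fail_flatten.
  - intro y; exact (nested_outcome (loop_step F) (fun u v => loop_exit F u (inr v)) a a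
                      (fun H => H) (fun u => loop_exit F u (inl y)) x).
  - exact (nested_outcome (loop_step F) (fun u v => loop_exit F u (inr v)) a (c X)
             (Hac X) (loop_fail F) x).
Qed.

Definition nonempty {X : Type} (t : Outcomes X) : Prop := (exists x, fst t x) \/ snd t.

Definition NEOutcomes (X : Type) : Type := {t : Outcomes X | nonempty t}.

Lemma ne_eq {X : Type} (p q : NEOutcomes X) : proj1_sig p = proj1_sig q -> p = q.
Proof.
  destruct p as [p Hp], q as [q Hq]; simpl; intros ->; f_equal; apply proof_irrelevance.
Qed.

Lemma pure_nonempty {X : Type} (x : X) : nonempty (pure x).
Proof. left; exists x; reflexivity. Qed.

Lemma obind_nonempty {X Y : Type} (f : X -> Outcomes Y) (t : Outcomes X) :
  (forall x, nonempty (f x)) -> nonempty t -> nonempty (obind f t).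
Proof.
  intros Hf [[x Hx] | Ht]; [|right; left; exact Ht].
  destruct (Hf x) as [[y Hy] | Hfx]; [left; exists y | right; right]; exists x; auto.
Qed.

Definition ne_pure {X : Type} (x : X) : NEOutcomes X := exist _ (pure x) (pure_nonempty x).

Definition ne_bind {X Y : Type} (f : X -> NEOutcomes Y) (t : NEOutcomes X) : NEOutcomes Y :=
  exist _ (obind (fun x => proj1_sig (f x)) (proj1_sig t))
          (obind_nonempty _ _ (fun x => proj2_sig (f x)) (proj2_sig t)).

Lemma ne_bind_ext (X Y : Type) (f g : X -> NEOutcomes Y) :
  (forall x, f x = g x) -> forall t, ne_bind f t = ne_bind g t.
Proof. intros H t; replace g with f by (extensionality x; apply H); reflexivity. Qed.

Lemma ne_bind_pure (X : Type) (t : NEOutcomes X) : ne_bind ne_pure t = t.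
Proof. apply ne_eq, obind_pure. Qed.

Lemma ne_pure_bind (X Y : Type) (f : X -> NEOutcomes Y) (x : X) : ne_bind f (ne_pure x) = f x.
Proof. apply ne_eq, (pure_obind X Y (fun x => proj1_sig (f x))). Qed.

Lemma ne_bind_assoc (X Y Z : Type) (f : X -> NEOutcomes Y) (g : Y -> NEOutcomes Z)
  (t : NEOutcomes X) : ne_bind g (ne_bind f t) = ne_bind (fun x => ne_bind g (f x)) t.
Proof. apply ne_eq, obind_assoc. Qed.

Definition NEOutcome : Monad := {|
  T := NEOutcomes; ret := @ne_pure; bind := @ne_bind;
  bind_ext := ne_bind_ext; bind_ret := ne_bind_pure; ret_bind := ne_pure_bind;
  bind_bind := ne_bind_assoc |}.

Lemma proj1_ne_bind_copair {A B C : Type} (k : A -> NEOutcomes C) (l : B -> NEOutcomes C)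
    (t : NEOutcomes (A + B)) :
  proj1_sig (ne_bind (copair k l) t) =
  obind (copair (fun a => proj1_sig (k a)) (fun b => proj1_sig (l b))) (proj1_sig t).
Proof. apply obind_ext; intros [a | b]; reflexivity. Qed.

Definition preserves_nonempty (d : Dagger Outcome) : Prop :=
  forall X Y (F : X -> Outcomes (Y + X)),
    (forall x, nonempty (F x)) -> forall x, nonempty (d X Y F x).

Section Restrict.
Variables (d : Dagger Outcome) (d_nonempty : preserves_nonempty d).

Definition restrict : Dagger NEOutcome :=
  fun X Y f x => exist _ (d X Y (fun x => proj1_sig (f x)) x)
                         (d_nonempty X Y _ (fun x => proj2_sig (f x)) x).

Lemma restrict_fixpoint : Fixpoint_ax Outcome d -> Fixpoint_ax NEOutcome restrict.
Proof.
  intros Hfix X Y f x; apply ne_eq.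
  etransitivity; [apply proj1_ne_bind_copair|].
  exact (Hfix X Y (fun x => proj1_sig (f x)) x).
Qed.

Lemma restrict_naturality :
  (forall X Y Z (g : Y -> Outcomes Z) (F : X -> Outcomes (Y + X)) x,
     (forall y, nonempty (g y)) -> obind g (d X Y F x) = d X Z (postcompose g F) x) ->
  Naturality_ax NEOutcome restrict.
Proof.
  intros Hnat X Y Z g f x; apply ne_eq.
  etransitivity; [apply (Hnat _ _ _ _ _ x (fun y => proj2_sig (g y)))|].
  apply (every_dagger_ext Outcome d); intro x'; symmetry; apply proj1_ne_bind_copair.
Qed.

Lemma restrict_uniformity : Uniformity_ax Outcome d -> Uniformity_ax NEOutcome restrict.
Proof.
  intros Huni X Y Z h g f Hgf x; apply ne_eq, Huni.
  intro x'; exact (f_equal (@proj1_sig _ _) (Hgf x')).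
Qed.

Lemma restrict_codiagonal : Codiagonal_ax NEOutcome restrict ->
  forall X Y (F : X -> Outcomes ((Y + X) + X)), (forall x, nonempty (F x)) ->
  forall x, d X Y (d X (Y + X)%type F) x = d X Y (flatten F) x.
Proof.
  intros Hcod X Y F HF x.
  pose proof (f_equal (@proj1_sig _ _) (Hcod X Y (fun x => exist _ (F x) (HF x)) x)) as E.
  etransitivity; [exact E|].
  apply (every_dagger_ext Outcome d); intro x'; apply proj1_ne_bind_copair.
Qed.
End Restrict.

Definition silent_step {X Y : Type} (F : X -> Outcomes (Y + X)) (u v : X) : Prop :=
  loop_step F u v /\ forall y, ~ loop_exit F u y.

Definition silent_divergence : Dagger Outcome :=
  fun X Y F x => (fun _ => False, reaches (loop_step F) (diverges (silent_step F)) x).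

Lemma silent_divergence_step_invariant : div_step_invariant silent_divergence.
Proof.
  intros X Y F; split; [intros y x; simpl; firstorder|].
  apply reaches_step_invariant; intros x Hx.
  apply diverges_step_invariant in Hx as [x' [[Hxx' _] Hx']]; eauto.
Qed.

Lemma silent_divergence_morphism_invariant : div_morphism_invariant silent_divergence.
Proof.
  intros X Z Y h F G [Hstep [Hexit _]] x.
  assert (Hsilent : forall x z, silent_step G (h x) z <->
                                exists x', silent_step F x x' /\ z = h x').
  { intros x0 z; unfold silent_step; rewrite Hstep.
    setoid_rewrite Hexit; firstorder. }
  apply outcomes_ext; simpl; [tauto|].
  apply (reaches_transport h _ _ Hstep); intro x0.
  apply (diverges_transport h _ _ Hsilent).
Qed.

(** If no exit and no failure is reachable, every reachable node has a step (its
    outcome is nonempty), and these steps are silent. *)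
Lemma silent_divergence_nonempty : preserves_nonempty (trace_dagger silent_divergence).
Proof.
  intros X Y F HF x; unfold nonempty, trace_dagger; simpl.
  destruct (classic (exists y, reaches (loop_step F) (fun w => loop_exit F w y) x))
    as [Hexit | Hno_exit]; [left; firstorder|].
  destruct (classic (reaches (loop_step F) (loop_fail F) x)) as [Hfail | Hno_fail];
    [right; left; exact Hfail|].
  right; right; apply reaches_here.
  exists (reach (loop_step F) x); split; [apply rt1n_refl|].
  intros v Hxv.
  assert (Hno_exit_v : forall y, ~ loop_exit F v y)
    by (intros y Hy; apply Hno_exit; exists y, v; auto).
  destruct (HF v) as [[[y | v'] Hv] | Hv].
  - exfalso; exact (Hno_exit_v y Hv).
  - exists v'; split; [split; [exact Hv | exact Hno_exit_v] | eapply reach_snoc; eauto].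
  - exfalso; apply Hno_fail; exists v; auto.
Qed.

(** Naturality of silent divergence for nonempty [g]: a node with an exit becomes
    exit-free after postcomposition only when [g] may fail there. *)
Lemma silent_divergence_naturality_at {X Y Z : Type} (g : Y -> Outcomes Z)
    (F : X -> Outcomes (Y + X)) x :
  (forall y, nonempty (g y)) ->
  obind g (trace_dagger silent_divergence X Y F x) =
  trace_dagger silent_divergence X Z (postcompose g F) x.
Proof.
  intros Hg; apply trace_naturality_at; simpl; [firstorder|].
  rewrite loop_step_postcompose.
  set (escape := exists y, reaches (loop_step F) (fun w => loop_exit F w y) x /\ snd (g y)).
  assert (Hsilent : forall u v, silent_step F u v -> silent_step (postcompose g F) u v).
  { intros u v [Huv Hu]; split; [rewrite loop_step_postcompose; exact Huv|].
    intros z Hz; apply loop_exit_postcompose in Hz as [y [Hy _]]; exact (Hu y Hy). }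
  split.
  - intros [[w [Hxw Hw]] | Hesc]; [|auto].
    destruct (classic escape) as [Hesc | Hno_esc]; [auto | left].
    exists w; split; [exact Hxw|].
    apply (diverges_sub (silent_step (postcompose g F))); [|exact Hw].
    intros u v Hwu [Huv Hu]; rewrite loop_step_postcompose in Huv; split; [exact Huv|].
    intros y Hy; destruct (Hg y) as [[z Hz] | Hfail].
    + apply (Hu z), loop_exit_postcompose; eauto.
    + apply Hno_esc; exists y; split; [|exact Hfail]; exists u; split; [|exact Hy].
      eapply reach_trans; [exact Hxw|].
      apply (reach_mono (silent_step (postcompose g F))); [|exact Hwu].
      intros u' v' [Hs _]; rewrite loop_step_postcompose in Hs; exact Hs.
  - intros [[w [Hxw Hw]] | [[y [[] _]] | Hesc]]; [left | right; exact Hesc].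
    exists w; split; [exact Hxw | exact (diverges_mono _ _ w Hsilent Hw)].
Qed.

Definition empty_dagger : Dagger Outcome := fun X Y F x => (fun _ => False, False).

Lemma empty_dagger_not_fixpoint : ~ Fixpoint_ax Outcome empty_dagger.
Proof.
  intros Hfix; specialize (Hfix unit unit (fun _ => pure (inl tt)) tt).
  apply (f_equal (fun t => fst t tt)) in Hfix; simpl in Hfix.
  rewrite <- Hfix; exists (inl tt); simpl; auto.
Qed.

Lemma empty_dagger_natural : Naturality_ax Outcome empty_dagger.
Proof. intros X Y Z g F x; apply outcomes_ext; simpl; firstorder. Qed.

(** Second counterexample: for the infinite loop on unit, postcomposing with
    [fun _ => eta true] yields [false] as a result of chaos on the right only. *)
Lemma chaos_not_natural :
  ~ Naturality_ax Outcome (trace_dagger (infinite_run True (fun _ => True))).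
Proof.
  set (chaos := trace_dagger (infinite_run True (fun _ => True))).
  set (g := fun _ : unit => pure true).
  set (F := fun _ : unit => @pure (unit + unit) (inr tt)).
  intros Hnat; specialize (Hnat unit unit bool g F tt).
  change (obind g (chaos unit unit F tt) = chaos unit bool (postcompose g F) tt) in Hnat.
  assert (Hfalse : fst (chaos unit bool (postcompose g F) tt) false).
  { right; split; [exact I|]; rewrite loop_step_postcompose.
    apply diverges_serial; intros []; exists tt; reflexivity. }
  rewrite <- Hnat in Hfalse; destruct Hfalse as [y [_ Hy]]; discriminate.
Qed.

(** Third counterexample: the inner loop at [true] loops or leaves to the outer state
    [false], which exits.  Nested, node [true] always has an inner exit, so there is no
    silent divergence; flattened, [true] is an exit-free node with a self-loop. *)
Definition tangled_loop (b : bool) : Outcomes ((unit + bool) + bool) :=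
  if b then (fun s => s = inr true \/ s = inl (inr false), False)
  else (fun s => s = inl (inl tt), False).

Lemma tangled_loop_nonempty b : nonempty (tangled_loop b).
Proof. left; destruct b; simpl; eauto. Qed.

Lemma tangled_inner_exit u v : loop_exit tangled_loop u (inr v) -> v = false.
Proof. destruct u; simpl; [intros [H | H] | intros H]; congruence. Qed.

Lemma tangled_nested_no_divergence :
  ~ snd (trace_dagger silent_divergence bool unit
           (trace_dagger silent_divergence bool (unit + bool)%type tangled_loop) true).
Proof.
  set (G := trace_dagger silent_divergence bool (unit + bool)%type tangled_loop).
  assert (Hinner_fail : forall w, ~ loop_fail G w).
  { intros w [[u [_ Hu]] | [u [_ Hu]]]; [destruct u; exact Hu|].
    apply diverges_step_invariant in Hu as [u' [[_ Hsilent] _]].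
    destruct u; [apply (Hsilent (inr false)) | apply (Hsilent (inl tt))]; cbn; auto. }
  assert (Hstep : forall u v, loop_step G u v -> v = false).
  { intros u v [[w [_ Hw]] | []]; exact (tangled_inner_exit w v Hw). }
  assert (Hfalse_exits : forall v, ~ silent_step G false v).
  { intros v [_ Hno_exit]; apply (Hno_exit tt); left; apply reaches_here; reflexivity. }
  intros [[w [_ Hw]] | [w [_ Hw]]]; [exact (Hinner_fail w Hw)|].
  apply diverges_step_invariant in Hw as [w' [[Hww' _] Hw']].
  rewrite (Hstep w w' Hww') in Hw'.
  apply diverges_step_invariant in Hw' as [w'' [Hsilent _]].
  exact (Hfalse_exits w'' Hsilent).
Qed.

Lemma tangled_flat_divergence :
  snd (trace_dagger silent_divergence bool unit (flatten tangled_loop) true).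
Proof.
  right; apply reaches_here.
  exists (fun w => w = true); split; [reflexivity|].
  intros w ->; exists true; split; [|reflexivity]; split.
  - rewrite loop_step_flatten; right; cbn; auto.
  - intros y; rewrite loop_exit_flatten; cbn; intros [H | H]; discriminate.
Qed.

Lemma silent_divergence_not_codiagonal :
  ~ Codiagonal_ax NEOutcome (restrict _ silent_divergence_nonempty).
Proof.
  intros Hcod.
  pose proof (restrict_codiagonal _ _ Hcod bool unit tangled_loop tangled_loop_nonempty true)
    as E.
  apply tangled_nested_no_divergence; rewrite E; exact tangled_flat_divergence.
Qed.

(** Fourth counterexample: flag divergence only on subsingleton state spaces; the
    counting loop on nat is collapsed by [h] onto the self-loop on unit. *)
Definition subsingleton (X : Type) : Prop := forall u v : X, u = v.

Lemma size_sensitive_not_uniform :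
  ~ Uniformity_ax Outcome (trace_dagger (infinite_run False subsingleton)).
Proof.
  set (d := trace_dagger (infinite_run False subsingleton)).
  set (G := fun _ : unit => @pure (unit + unit) (inr tt)).
  set (F := fun n : nat => @pure (unit + nat) (inr (S n))).
  intros Huni.
  assert (Hpremise : forall n, G tt = obind (fun s => pure (summap (fun _ => tt) s)) (F n))
    by (intro n; unfold F; rewrite pure_obind; reflexivity).
  pose proof (Huni nat unit unit (fun _ => tt) G F Hpremise 0) as E.
  assert (Hunit : snd (d unit unit G tt)).
  { right; split; [intros [] []; reflexivity|].
    apply diverges_serial; intros []; exists tt; reflexivity. }
  change (d unit unit G tt = d nat unit F 0) in E.
  rewrite E in Hunit; destruct Hunit as [[n [_ []]] | [Hsub _]].
  discriminate (Hsub 0 1).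
Qed.

Theorem proposition4 :
  (exists (M : Monad) (d : Dagger M), dagger_ext M d /\
      ~ Fixpoint_ax M d /\ Naturality_ax M d /\ Codiagonal_ax M d /\ Uniformity_ax M d) /\
  (exists (M : Monad) (d : Dagger M), dagger_ext M d /\
      Fixpoint_ax M d /\ ~ Naturality_ax M d /\ Codiagonal_ax M d /\ Uniformity_ax M d) /\
  (exists (M : Monad) (d : Dagger M), dagger_ext M d /\
      Fixpoint_ax M d /\ Naturality_ax M d /\ ~ Codiagonal_ax M d /\ Uniformity_ax M d) /\
  (exists (M : Monad) (d : Dagger M), dagger_ext M d /\
      Fixpoint_ax M d /\ Naturality_ax M d /\ Codiagonal_ax M d /\ ~ Uniformity_ax M d).
Proof.
  split; [|split; [|split]].
  - exists Outcome, empty_dagger.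
    split; [apply every_dagger_ext | split; [exact empty_dagger_not_fixpoint|]].
    split; [exact empty_dagger_natural|].
    split; [intros X Y F x | intros X Y Z h G F _ x]; reflexivity.
  - exists Outcome, (trace_dagger (infinite_run True (fun _ => True))).
    split; [apply every_dagger_ext | split; [|split; [|split]]].
    + apply trace_fixpoint, infinite_run_step_invariant.
    + exact chaos_not_natural.
    + apply infinite_run_codiagonal; auto.
    + apply trace_uniformity, infinite_run_morphism_invariant.
  - exists NEOutcome, (restrict _ silent_divergence_nonempty).
    split; [apply every_dagger_ext | split; [|split; [|split]]].
    + apply restrict_fixpoint, trace_fixpoint, silent_divergence_step_invariant.
    + apply restrict_naturality; intros; apply silent_divergence_naturality_at; assumption.
    + exact silent_divergence_not_codiagonal.
    + apply restrict_uniformity, trace_uniformity, silent_divergence_morphism_invariant.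
  - exists Outcome, (trace_dagger (infinite_run False subsingleton)).
    split; [apply every_dagger_ext | split; [|split; [|split]]].
    + apply trace_fixpoint, infinite_run_step_invariant.
    + apply infinite_run_naturality.
    + apply infinite_run_codiagonal; intros X [].
    + exact size_sensitive_not_uniform.
Qed.
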